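(* Let $Y$ be a real Hilbert space, let $\mu>0$, and let $Q\colon Y\rightrightarrows Y$ be $\mu$-unmonotone with domain $D(Q)=Y$. Suppose also that $-Q-\mu\mathbb{I}_Y$ is maximally monotone. Then $Q$ touches every maximally monotone multifunction on $Y$; that is, for every maximally monotone $M\colon Y\rightrightarrows Y$, the set $G(M)\cap G(Q)$ is a singleton in $Y\times Y$.
   Context: For a multifunction $Q\colon Y\rightrightarrows Y$, $G(Q)=\{(y,q): q\in Qy\}$ is its graph and $D(Q)=\{y: Qy\neq\emptyset\}$ its domain. For $\mu>0$, $Q$ is $\mu$-unmonotone if for all $(y_1,q_1),(y_2,q_2)\in G(Q)$, $\langle y_1-y_2,q_1-q_2\rangle+\mu\|(y_1-y_2,q_1-q_2)\|^2\le 0$, where $\|(a,b)\|^2=\|a\|^2+\|b\|^2$. Two multifunctions $M,Q$ on $Y$ touch if $G(M)\cap G(Q)$ is a singleton. $\mathbb{I}_Y$ is the identity on $Y$ and $-Q-\mu\mathbb{I}_Y$ is the multifunction $y\mapsto\{-q-\mu y: q\in Qy\}$. *)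

From mathcomp Require Import all_boot all_order all_algebra.
From mathcomp Require Import all_classical all_reals all_analysis.
Import Order.TTheory GRing.Theory Num.Theory.
Import numFieldNormedType.Exports.
Local Open Scope classical_set_scope.
Local Open Scope ring_scope.

Set Implicit Arguments. Unset Strict Implicit. Unset Printing Implicit Defensive.

(* A real Hilbert space: a complete normed space over R whose norm is induced
   by a (symmetric, bilinear) inner product [ip]: `|x|^2 = ip x x. *)
Definition is_inner_product (R : realType) (Y : completeNormedModType R)
    (ip : Y -> Y -> R) : Prop :=
  [/\ (forall x y, ip x y = ip y x),
      (forall (a : R) x y z, ip (a *: x + y) z = a * ip x z + ip y z) &
      (forall x, `|x| ^+ 2 = ip x x)].

(* multifunctions Y => Y are maps Y -> set Y *)
Definition graph (Y : Type) (Q : Y -> set Y) : set (Y * Y) :=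
  [set p | Q p.1 p.2].

Definition domain (Y : Type) (Q : Y -> set Y) : set Y :=
  [set y | Q y !=set0].

Definition monotone (R : realType) (Y : completeNormedModType R)
    (ip : Y -> Y -> R) (M : Y -> set Y) : Prop :=
  forall y1 q1 y2 q2, M y1 q1 -> M y2 q2 -> 0 <= ip (y1 - y2) (q1 - q2).

Definition maximally_monotone (R : realType) (Y : completeNormedModType R)
    (ip : Y -> Y -> R) (M : Y -> set Y) : Prop :=
  monotone ip M /\
  forall M' : Y -> set Y, monotone ip M' -> graph M `<=` graph M' ->
    graph M' = graph M.

(* mu-unmonotone, with ||(a,b)||^2 = ||a||^2 + ||b||^2 *)
Definition unmonotone (R : realType) (Y : completeNormedModType R)
    (ip : Y -> Y -> R) (mu : R) (Q : Y -> set Y) : Prop :=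
  forall y1 q1 y2 q2, Q y1 q1 -> Q y2 q2 ->
    ip (y1 - y2) (q1 - q2) + mu * (`|y1 - y2| ^+ 2 + `|q1 - q2| ^+ 2) <= 0.

Definition neg_shift (R : realType) (Y : completeNormedModType R)
    (mu : R) (Q : Y -> set Y) : Y -> set Y :=
  fun y => [set - q - mu *: y | q in Q y].

Definition touch (Y : Type) (M Q : Y -> set Y) : Prop :=
  exists p : Y * Y, graph M `&` graph Q = [set p].

From Pilot Require Import Defs.
From mathcomp Require Import all_boot all_order all_algebra.
From mathcomp Require Import all_classical all_reals all_analysis.
From mathcomp Require Import ring lra.
Import Order.TTheory GRing.Theory Num.Theory.
Import numFieldNormedType.Exports.
Local Open Scope classical_set_scope.
Local Open Scope ring_scope.

(* Since D(Q) = Y and Q is mu-unmonotone, Q is single-valued, Q = f, and a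
   monotone graph and a mu-unmonotone graph share at most one point: at a
   common pair both differences must vanish.  For existence, the resolvent
   J = (I + lam M)^-1 of the maximally monotone M is everywhere defined by
   Minty's theorem and nonexpansive, while -f is strongly monotone; hence for
   small lam > 0 the map y |-> J (y + lam f y) is a contraction, and its
   Banach fixed point p satisfies M p (f p).  Minty's theorem is obtained by
   minimising r + (|x|^2 + |u|^2) / 2 over the epigraph of the Fitzpatrick
   function of M: the minimiser (x0, u0) exists by strong convexity and
   completeness, and its optimality condition forces (x0, -x0) into G(M). *)

Set Implicit Arguments.
Unset Strict Implicit.

Section RealNormedSpace.
Variables (R : realType) (Y : completeNormedModType R).

Lemma ge0_of_ge0_near0 (c K : R) : 0 <= K ->
  (forall t, 0 < t <= 1 -> 0 <= c + t * K) -> 0 <= c.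
Proof.
move=> K0 hc; rewrite leNgt; apply/negP => c0.
set t := - c / (K - c).
have tK : t * (K - c) = - c by rewrite mulfVK // gt_eqF //; lra.
have t0 : 0 < t by rewrite divr_gt0 ?oppr_gt0 //; lra.
have t1 : t <= 1 by rewrite ler_pdivrMr ?mul1r; lra.
have := hc t; rewrite t0 t1 => /(_ isT); nra.
Qed.

Lemma cvgn_sqr_dist_le (z : nat -> Y) (e : nat -> R) :
  e @ \oo --> 0 -> (forall n k, `|z n - z k| ^+ 2 <= e n + e k) -> cvgn z.
Proof.
move=> e0 hz; apply/cauchy_cvgP/cauchy_ballP => eps eps0; near_simpl.
have eps20 : 0 < eps ^+ 2 / 2 by rewrite divr_gt0 ?exprn_gt0.
have [N _ hN] := cvgr_lt 0 e0 _ eps20.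
exists ([set n | (N <= n)%N], [set n | (N <= n)%N]); first by split; exists N.
move=> [n k] [/= Nn Nk]; rewrite -ball_normE /=.
have := hz n k; have := hN _ Nn; have := hN _ Nk.
rewrite -(@ltr_pXn2r _ 2) ?nnegrE ?(ltW eps0) //; lra.
Qed.

Lemma contraction_fixed_point (f : Y -> Y) (q : R) : 0 <= q < 1 ->
  (forall x y, `|f x - f y| <= q * `|x - y|) -> exists p, f p = p.
Proof.
case/andP=> q0 q1 f_lip.
have f_ctr : is_contraction (totalfun_ setT f : {fun setT >-> setT}).
  by exists (NngNum q0); split => //= -[x y] _; exact: f_lip.
have [p _ fp] := banach_fixed_point f_ctr closedT (ex_intro _ 0 I).
by exists p.
Qed.

Lemma unmonotone_eq (ip : Y -> Y -> R) (mu : R) (Q : Y -> set Y) y1 q1 y2 q2 :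
  0 < mu -> unmonotone ip mu Q -> Q y1 q1 -> Q y2 q2 ->
  0 <= ip (y1 - y2) (q1 - q2) -> y1 = y2 /\ q1 = q2.
Proof.
move=> mu0 Q_unmono Qyq1 Qyq2 ip_ge0.
have sum_le0 : `|y1 - y2| ^+ 2 + `|q1 - q2| ^+ 2 <= 0.
  by rewrite -(pmulr_rle0 _ mu0); have := Q_unmono _ _ _ _ Qyq1 Qyq2; lra.
have sqr_norm0 (a : Y) : `|a| ^+ 2 = 0 -> a = 0.
  by move/eqP; rewrite sqrf_eq0 normr_eq0 => /eqP.
have := sqr_ge0 `|y1 - y2|; have := sqr_ge0 `|q1 - q2|.
by split; apply/subr0_eq/sqr_norm0; lra.
Qed.

End RealNormedSpace.

Section InnerProductSpace.
Variables (R : realType) (Y : completeNormedModType R) (ip : Y -> Y -> R).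
Hypothesis ip_inner : is_inner_product ip.

Lemma ipC x y : ip x y = ip y x.
Proof. by case: ip_inner. Qed.

Lemma ipxx x : ip x x = `|x| ^+ 2.
Proof. by case: ip_inner => _ _ ->. Qed.

Lemma ipDl x y z : ip (x + y) z = ip x z + ip y z.
Proof. by case: ip_inner => _ ipL _; have := ipL 1 x y z; rewrite scale1r mul1r. Qed.

Lemma ip0l z : ip 0 z = 0.
Proof. by have := ipDl 0 0 z; rewrite addr0 => ?; lra. Qed.

Lemma ipZl a x z : ip (a *: x) z = a * ip x z.
Proof. by case: ip_inner => _ ipL _; rewrite -[a *: x]addr0 ipL ip0l addr0. Qed.

Lemma ipNl x z : ip (- x) z = - ip x z.
Proof. by rewrite -scaleN1r ipZl mulN1r. Qed.

Lemma ipBl x y z : ip (x - y) z = ip x z - ip y z.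
Proof. by rewrite ipDl ipNl. Qed.

Lemma ip0r z : ip z 0 = 0.
Proof. by rewrite ipC ip0l. Qed.

Lemma ipDr x y z : ip z (x + y) = ip z x + ip z y.
Proof. by rewrite ipC ipDl !(ipC z). Qed.

Lemma ipZr a x z : ip z (a *: x) = a * ip z x.
Proof. by rewrite ipC ipZl ipC. Qed.

Lemma ipNr x z : ip z (- x) = - ip z x.
Proof. by rewrite ipC ipNl ipC. Qed.

Lemma ipBr x y z : ip z (x - y) = ip z x - ip z y.
Proof. by rewrite ipDr ipNr. Qed.

Lemma ipxx_ge0 x : 0 <= ip x x.
Proof. by rewrite ipxx sqr_ge0. Qed.

Lemma ipxx_le0 x : ip x x <= 0 -> x = 0.
Proof. by rewrite ipxx => ?; apply/normr0_eq0; nra. Qed.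

Ltac ip_expand :=
  rewrite ?(ipDl, ipDr, ipBl, ipBr, ipZl, ipZr, ipNl, ipNr, ip0l, ip0r).

Lemma ip_polarization a b : ip a b = (`|a + b| ^+ 2 - `|a| ^+ 2 - `|b| ^+ 2) / 2.
Proof. by rewrite -!ipxx; ip_expand; rewrite (ipC b a); field. Qed.

Lemma cvg_ip (a b : nat -> Y) la lb : a @ \oo --> la -> b @ \oo --> lb ->
  (fun n => ip (a n) (b n)) @ \oo --> ip la lb.
Proof.
move=> a_cvg b_cvg.
have cvg_sqr (c : nat -> Y) lc : c @ \oo --> lc -> (fun n => `|c n| ^+ 2) @ \oo --> `|lc| ^+ 2.
  by move=> c_cvg; apply: cvgM; exact: cvg_norm.
under eq_fun do rewrite ip_polarization; rewrite ip_polarization.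
by apply: cvgM (cvg_cst _); apply: cvgB; [apply: cvgB|]; apply: cvg_sqr => //; apply: cvgD.
Qed.

Section Minty.
Variable G : Y -> set Y.
Hypothesis G_mono : Defs.monotone ip G.
Hypothesis G_max : forall a b, (forall y v, G y v -> 0 <= ip (y - a) (v - b)) -> G a b.

Definition fitz_epi x u r := forall y v, G y v -> ip x v + ip y u - ip y v <= r.

Definition fitz_energy x u r := r + (ip x x + ip u u) / 2.

Lemma graph_nonempty : exists y v, G y v.
Proof.
have [//|G0] := pselect (exists y v, G y v).
by exists 0, 0; apply: G_max => y v Gyv; exfalso; apply: G0; exists y, v.
Qed.

Lemma fitz_epi_graph y v : G y v -> fitz_epi y v (ip y v).
Proof.
move=> Gyv y' v' Gyv'; have := G_mono Gyv Gyv'.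
by ip_expand; rewrite (ipC y' v); lra.
Qed.

Lemma fitz_epi_ge_ip x u r : fitz_epi x u r -> ip x u <= r.
Proof.
move=> epi; rewrite leNgt; apply/negP => r_lt.
have Gxu : G x u.
  by apply: G_max => y v Gyv; have := epi y v Gyv; ip_expand; rewrite (ipC x v); lra.
by have := epi x u Gxu; lra.
Qed.

Lemma fitz_energy_ge0 x u r : fitz_epi x u r -> 0 <= fitz_energy x u r.
Proof.
move/fitz_epi_ge_ip; have := ipxx_ge0 (x + u).
by rewrite /fitz_energy; ip_expand; rewrite (ipC u x); lra.
Qed.

Lemma fitz_epi_segment x0 u0 r0 x u r t : 0 <= t <= 1 ->
  fitz_epi x0 u0 r0 -> fitz_epi x u r ->
  fitz_epi (x0 + t *: (x - x0)) (u0 + t *: (u - u0)) (r0 + t * (r - r0)).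
Proof.
move=> /andP[t0 t1] epi0 epi y v Gyv.
have := epi0 y v Gyv; have := epi y v Gyv; ip_expand; nra.
Qed.

Lemma fitz_energy_segment x0 u0 r0 x u r t :
  fitz_energy (x0 + t *: (x - x0)) (u0 + t *: (u - u0)) (r0 + t * (r - r0)) =
  (1 - t) * fitz_energy x0 u0 r0 + t * fitz_energy x u r
  - t * (1 - t) * ((ip (x - x0) (x - x0) + ip (u - u0) (u - u0)) / 2).
Proof. by rewrite /fitz_energy; ip_expand; rewrite (ipC x x0) (ipC u u0); field. Qed.

Lemma fitz_energy_dist_le m x u r x' u' r' :
  (forall x u r, fitz_epi x u r -> m <= fitz_energy x u r) ->
  fitz_epi x u r -> fitz_epi x' u' r' ->
  ip (x - x') (x - x') + ip (u - u') (u - u')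
    <= 4 * (fitz_energy x u r - m) + 4 * (fitz_energy x' u' r' - m).
Proof.
move=> m_le epi epi'.
have half : 0 <= (1 / 2 : R) <= 1 by apply/andP; split; lra.
have := m_le _ _ _ (fitz_epi_segment half epi' epi).
by rewrite fitz_energy_segment; lra.
Qed.

Lemma fitz_epi_lim (xs us : nat -> Y) (rs : nat -> R) x u m :
  xs @ \oo --> x -> us @ \oo --> u -> (forall n, fitz_epi (xs n) (us n) (rs n)) ->
  (fun n => fitz_energy (xs n) (us n) (rs n)) @ \oo --> m ->
  fitz_epi x u (m - (ip x x + ip u u) / 2).
Proof.
move=> xs_cvg us_cvg epi E_cvg y v Gyv.
suff : ip x v + ip y u - ip y v + (ip x x + ip u u) / 2 <= m by lra.
apply: (@ler_cvg_to _ _ _ _ (fun n => ip (xs n) v + ip y (us n) - ip y v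
  + (ip (xs n) (xs n) + ip (us n) (us n)) / 2) _ _ _ _ E_cvg); last first.
  by apply: nearW => n; have := epi n y v Gyv; rewrite /fitz_energy; lra.
apply: cvgD; first apply: cvgB; first apply: cvgD.
- by apply: cvg_ip => //; exact: cvg_cst.
- by apply: cvg_ip => //; exact: cvg_cst.
- exact: cvg_cst.
- by apply: cvgM (cvg_cst _); apply: cvgD; exact: cvg_ip.
Qed.

Lemma fitz_energy_minimizer : exists x0 u0 r0, fitz_epi x0 u0 r0 /\
  forall x u r, fitz_epi x u r -> fitz_energy x0 u0 r0 <= fitz_energy x u r.
Proof.
have [y0 [v0 G0]] := graph_nonempty.
pose V := [set e | exists x u r, fitz_epi x u r /\ e = fitz_energy x u r].
have V_inf : has_inf V.
  split; last by exists 0 => _ [x [u [r [epi ->]]]]; exact: fitz_energy_ge0.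
  exists (fitz_energy y0 v0 (ip y0 v0)), y0, v0, (ip y0 v0).
  by split => //; exact: fitz_epi_graph.
set m := inf V.
have m_le x u r : fitz_epi x u r -> m <= fitz_energy x u r.
  by move=> epi; apply: (ge_inf V_inf.2); exists x, u, r.
have /choice [p p_min] : forall n, exists p : Y * Y * R,
    fitz_epi p.1.1 p.1.2 p.2 /\ fitz_energy p.1.1 p.1.2 p.2 < m + harmonic n.
  move=> n; have [_ [x [u [r [epi ->]]]] E_lt] := inf_adherent (harmonic_gt0 n) V_inf.
  by exists (x, u, r).
pose xs n := (p n).1.1; pose us n := (p n).1.2; pose E n := fitz_energy (xs n) (us n) (p n).2.
have epi n : fitz_epi (xs n) (us n) (p n).2 := (p_min n).1.
have E_cvg : E @ \oo --> m.
  apply: (@squeeze_cvgr _ _ _ _ (cst m) (fun n => m + harmonic n)); last 2 first.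
  - exact: cvg_cst.
  - by rewrite -[X in _ --> X]addr0; apply: cvgD; [exact: cvg_cst | exact: cvg_harmonic].
  by apply: nearW => n; rewrite m_le //= ltW //; exact: (p_min n).2.
have dist_le n k := fitz_energy_dist_le m_le (epi n) (epi k).
have e_cvg : (fun n => 4 * (E n - m)) @ \oo --> 0.
  by rewrite -(mulr0 4) -(subrr m); apply: cvgM (cvg_cst _) (cvgB E_cvg (cvg_cst _)).
have xs_cvg : cvgn xs.
  apply: (cvgn_sqr_dist_le e_cvg) => n k; rewrite -ipxx.
  by apply: le_trans (dist_le n k); rewrite lerDl ipxx_ge0.
have us_cvg : cvgn us.
  apply: (cvgn_sqr_dist_le e_cvg) => n k; rewrite -ipxx.
  by apply: le_trans (dist_le n k); rewrite lerDr ipxx_ge0.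
have epi0 := fitz_epi_lim xs_cvg us_cvg epi E_cvg.
do 3 eexists; split; first exact: epi0.
by move=> x u r /m_le; rewrite /fitz_energy subrK.
Qed.

Lemma fitz_energy_growth x0 u0 r0 x u r :
  (forall x u r, fitz_epi x u r -> fitz_energy x0 u0 r0 <= fitz_energy x u r) ->
  fitz_epi x0 u0 r0 -> fitz_epi x u r ->
  fitz_energy x0 u0 r0 + (ip (x - x0) (x - x0) + ip (u - u0) (u - u0)) / 2
    <= fitz_energy x u r.
Proof.
move=> min0 epi0 epi; rewrite -subr_ge0.
set K := (ip (x - x0) (x - x0) + ip (u - u0) (u - u0)) / 2.
have K0 : 0 <= K by rewrite divr_ge0 // addr_ge0 // ipxx_ge0.
apply: (ge0_of_ge0_near0 K0) => t /andP[t0 t1].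
have t01 : 0 <= t <= 1 by rewrite ltW.
have := min0 _ _ _ (fitz_epi_segment t01 epi0 epi).
rewrite fitz_energy_segment -/K; nra.
Qed.

Lemma minty : exists x, G x (- x).
Proof.
have [x0 [u0 [r0 [epi0 min0]]]] := fitz_energy_minimizer.
have growth y v : G y v ->
    r0 + ip x0 x0 + ip u0 u0 - ip x0 y - ip u0 v <= ip y v.
  move=> Gyv; have := fitz_energy_growth min0 epi0 (fitz_epi_graph Gyv).
  by rewrite /fitz_energy; ip_expand; rewrite (ipC y x0) (ipC v u0); lra.
have r0_ge := fitz_epi_ge_ip epi0.
have G_opp : G (- u0) (- x0).
  apply: G_max => y v Gyv; have := growth y v Gyv; have := ipxx_ge0 (x0 + u0).
  by ip_expand; rewrite (ipC y x0) (ipC u0 x0); lra.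
have sum0 : x0 + u0 = 0.
  apply: ipxx_le0; have := growth _ _ G_opp.
  by ip_expand; rewrite (ipC u0 x0); lra.
have u0E : u0 = - x0 by apply/eqP; rewrite -addr_eq0 addrC sum0.
by exists x0; move: G_opp; rewrite u0E opprK.
Qed.

End Minty.

Lemma maximally_monotone_related (M : Y -> set Y) a b : maximally_monotone ip M ->
  (forall y v, M y v -> 0 <= ip (y - a) (v - b)) -> M a b.
Proof.
case=> M_mono M_max ab_mono.
pose M' y := [set v | M y v \/ (y = a /\ v = b)].
have M'_mono : Defs.monotone ip M'.
  move=> y1 q1 y2 q2 [M1|[-> ->]] [M2|[-> ->]].
  - exact: M_mono.
  - exact: ab_mono.
  - by have := ab_mono _ _ M2; rewrite -(opprB y2) -(opprB q2) ipNl ipNr opprK.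
  - by rewrite !subrr ip0l.
have M'E : graph M' = graph M by apply: M_max => // -[y v] Myv; left.
have : graph M' (a, b) by right.
by rewrite M'E.
Qed.

Lemma resolvent_exists (M : Y -> set Y) lam : maximally_monotone ip M -> 0 < lam ->
  forall z, exists y, M y (lam^-1 *: (z - y)).
Proof.
move=> M_max lam0 z.
have lam_neq0 : lam != 0 by rewrite gt_eqF.
pose G a b := M a (lam^-1 *: (b + z)).
have G_mono : Defs.monotone ip G.
  move=> y v y' v' Gyv Gyv'; have := M_max.1 _ _ _ _ Gyv Gyv'.
  by rewrite -scalerBr ipZr opprD addrACA subrr addr0 pmulr_rge0 // invr_gt0.
have G_max a b : (forall y v, G y v -> 0 <= ip (y - a) (v - b)) -> G a b.
  move=> ab_mono; apply: (maximally_monotone_related M_max) => y w Myw.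
  have := ab_mono y (lam *: w - z); rewrite /G subrK scalerA mulVf ?scale1r //.
  have -> : w - lam^-1 *: (b + z) = lam^-1 *: (lam *: w - z - b).
    by rewrite !scalerBr scalerA mulVf // scale1r scalerDr opprD addrA addrAC.
  by rewrite ipZr => /(_ Myw); rewrite pmulr_rge0 // invr_gt0.
have [x Gx] := minty G_mono G_max.
by exists x; move: Gx; rewrite /G addrC.
Qed.

Lemma resolvent_nonexpansive (M : Y -> set Y) lam y z y' z' :
  Defs.monotone ip M -> 0 < lam ->
  M y (lam^-1 *: (z - y)) -> M y' (lam^-1 *: (z' - y')) -> `|y - y'| <= `|z - z'|.
Proof.
move=> M_mono lam0 My My'; have := M_mono _ _ _ _ My My'.
rewrite -scalerBr ipZr pmulr_rge0 ?invr_gt0 //.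
have -> : z - y - (z' - y') = (z - z') - (y - y').
  by rewrite !opprD !opprK addrACA.
move: (y - y') (z - z') => d e de_ge0; rewrite -ler_sqr ?nnegrE // -!ipxx.
by have := ipxx_ge0 (e - d); move: de_ge0; ip_expand; rewrite (ipC e d); lra.
Qed.

Lemma unmonotone_step_contraction (mu lam : R) a b :
  ip a b + mu * (`|a| ^+ 2 + `|b| ^+ 2) <= 0 -> 0 < lam <= 2 * mu -> lam * mu <= 1 ->
  `|a + lam *: b| <= (1 - lam * mu) * `|a|.
Proof.
move=> ab_le /andP[lam0 lam_le] lam_mu.
rewrite -ler_sqr ?nnegrE ?normr_ge0 ?mulr_ge0 ?subr_ge0 // exprMn -!ipxx.
rewrite -!ipxx in ab_le; ip_expand; rewrite (ipC b a).
have h1 : lam * (ip a b + mu * (ip a a + ip b b)) <= 0.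
  exact: mulr_ge0_le0 (ltW lam0) ab_le.
have h2 : 0 <= (2 * mu - lam) * lam * ip b b.
  by rewrite !mulr_ge0 ?ipxx_ge0 ?subr_ge0 // ltW.
have h3 : 0 <= (lam * mu) ^+ 2 * ip a a by rewrite mulr_ge0 ?sqr_ge0 ?ipxx_ge0.
lra.
Qed.

Lemma unmonotone_fun_meets_maximally_monotone (M : Y -> set Y) (mu : R) (f : Y -> Y) :
  maximally_monotone ip M -> 0 < mu ->
  (forall y y', ip (y - y') (f y - f y') + mu * (`|y - y'| ^+ 2 + `|f y - f y'| ^+ 2) <= 0) ->
  exists p, M p (f p).
Proof.
move=> M_max mu0 f_unmono.
(* Any [lam] with [0 < lam <= 2 * mu] and [lam * mu < 1] would do. *)
pose lam := mu / (1 + mu ^+ 2).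
have lamE : lam * (1 + mu ^+ 2) = mu by rewrite mulfVK // gt_eqF // ltr_wpDr ?sqr_ge0.
have lam0 : 0 < lam by rewrite divr_gt0 // ltr_wpDr ?sqr_ge0.
have lam_mu0 : 0 < lam * mu by rewrite mulr_gt0.
have lam_le : lam <= 2 * mu by rewrite expr2 in lamE; nra.
have lam_mu : lam * mu < 1 by rewrite expr2 in lamE; nra.
have /choice [J MJ] := resolvent_exists M_max lam0.
have [p Jp] : exists p, J (p + lam *: f p) = p.
  apply: (@contraction_fixed_point _ _ _ (1 - lam * mu)) => [|y y'].
    by rewrite subr_ge0 ltW //= ltrBlDr ltrDl.
  apply: le_trans (resolvent_nonexpansive M_max.1 lam0 (MJ _) (MJ _)) _.
  rewrite (_ : _ - _ = (y - y') + lam *: (f y - f y')); last by rewrite scalerBr opprD addrACA.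
  by apply: unmonotone_step_contraction; [exact: f_unmono | rewrite lam0 | exact: ltW].
exists p; have := MJ (p + lam *: f p).
by rewrite Jp addrAC subrr add0r scalerA mulVf ?gt_eqF // scale1r.
Qed.

End InnerProductSpace.

Theorem theorem2p6 (R : realType) (Y : completeNormedModType R)
    (ip : Y -> Y -> R) (mu : R) (Q : Y -> set Y) :
  is_inner_product ip -> 0 < mu ->
  unmonotone ip mu Q -> domain Q = setT ->
  maximally_monotone ip (neg_shift mu Q) ->
  forall M : Y -> set Y, maximally_monotone ip M -> touch M Q.
Proof.
move=> ip_inner mu0 Q_unmono Q_dom _ M M_max.
have /choice [f Qf] : forall y, exists q, Q y q.
  by move=> y; have : domain Q y by rewrite Q_dom.
have [p Mp] : exists p, M p (f p).
  apply: (unmonotone_fun_meets_maximally_monotone ip_inner M_max mu0) => y y'.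
  exact: Q_unmono _ _ _ _ (Qf y) (Qf y').
exists (p, f p); apply/seteqP; split => [[y q] [/= Myq Qyq] | _ ->]; last first.
  by split; [exact: Mp | exact: Qf].
have [-> ->] : y = p /\ q = f p.
  exact: unmonotone_eq mu0 Q_unmono Qyq (Qf p) (M_max.1 _ _ _ _ Myq Mp).
by [].
Qed.
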